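(* Let $A$ be a set of factorizations on an alphabet $S$ and let $w$ be a weight on $A$. Let $\Phi$ be the linear operator with $\Phi(t^n)=n!$ for $n\ge 0$ which fixes all other variables (extended coefficientwise to power series in the other variables). Then \[ \Phi\big(f_{A,w}(t)\big) = \sum_{W} w(W), \] whenever both sides are defined, where the sum on the right runs over all elements $W\in A$ having at most one part (i.e., words, including the empty factorization).
   Context: A word on an alphabet $S$ is a finite sequence of letters of $S$; a subword is a consecutive block of letters. A factorization on $S$ is an ordered list $(\phi_1)(\phi_2)\cdots(\phi_k)$ of nonempty words on $S$, its parts; $\mathrm{parts}(\phi)=k$ is the number of parts. A word $W$ is identified with the one-part factorization $(W)$, and the empty word with the factorization with no parts, written $\emptyset$. For $T\subseteq S$, the restriction $\phi|_T$ is the factorization whose parts are the maximal subwords of the parts of $\phi$ that use only letters of $T$, ordered by their occurrence in $\phi$ (it is $\emptyset$ if $\phi$ uses no letter of $T$). A weight on a set $A$ of factorizations on $S$ is a function $w$ from $A$ together with all restrictions of elements of $A$ into a polynomial ring $\mathbb{R}[x_1,x_2,\ldots]$ such that $w(\phi)=w(\phi|_T)\,w(\phi|_{S\setminus T})$ for all $\phi\in A$ and $T\subseteq S$. The polynomials $l_k(t)$ are defined by $\sum_{k\ge0}l_k(t)x^k=e^{tx/(1+x)}$ (so $l_0=1$, $l_1=t$; $l_k(t)=(-1)^kL_k^{(-1)}(t)$ with $L_k^{(\alpha)}$ the generalized Laguerre polynomials). The Laguerre series of $A$ with respect to $w$ is the formal power series $f_{A,w}(t)=\sum_{\phi\in A}w(\phi)\,l_{\mathrm{parts}(\phi)}(t)$,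 when this sum is well-defined as a formal power series. *)

(* Polynomial ring R[x_0,x_1,...] in countably many variables
   is modelled by the monoid algebra {malg R[{cmonom nat}]} of multinomials. *)
From HB Require Import structures.
From mathcomp Require Import all_boot all_order all_algebra.
From mathcomp Require Import finmap.
From mathcomp.multinomials Require Import monalg.
From mathcomp Require Import reals.
Set Implicit Arguments. Unset Strict Implicit. Unset Printing Implicit Defensive.
Import Order.TTheory GRing.Theory Num.Theory.
Local Open Scope ring_scope.

Definition monom := {cmonom nat}.
Definition xpoly (R : realType) := {malg R[monom]}.

Section Factorizations.
Variable S : eqType.

Definition is_factorization (phi : seq (seq S)) : bool :=
  all (fun p => p != [::]) phi.

Definition parts (phi : seq (seq S)) : nat := size phi.

(** Maximal subwords of a word [p] using only letters of [T], in order;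
    [cur] is the run currently being built. *)
Fixpoint runs_aux (T : pred S) (cur : seq S) (p : seq S) : seq (seq S) :=
  match p with
  | [::] => if cur is [::] then [::] else [:: cur]
  | x :: p' =>
      if T x then runs_aux T (rcons cur x) p'
      else (if cur is [::] then [::] else [:: cur]) ++ runs_aux T [::] p'
  end.

Definition restrict (T : pred S) (phi : seq (seq S)) : seq (seq S) :=
  flatten (map (runs_aux T [::]) phi).

End Factorizations.

(** Well-defined (finitely supported) sum of a family over a possibly
    infinite index set [P]: [c] is the sum of [F] over [P], all but finitely
    many terms being zero. *)
Definition has_fsum (R : realType) (I : eqType) (P : I -> Prop) (F : I -> R)
    (c : R) : Prop :=
  exists s : seq I,
    [/\ uniq s, (forall i, i \in s -> P i),
        (forall i, P i -> F i != 0 -> i \in s) & c = \sum_(i <- s) F i].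

(** Laguerre polynomials l_k(t) defined by sum_k l_k(t) x^k = e^{tx/(1+x)}
    = sum_j t^j/j! (x/(1+x))^j.  The coefficient of t^j x^k is
    [x^k] (x/(1+x))^j / j!, and x/(1+x) = x * sum_{i<=k} (-x)^i mod x^(k+1). *)
Definition lag_coef (R : realType) (k j : nat) : R :=
  ((('X * \sum_(i < k.+1) (- 'X) ^+ i) ^+ j : {poly R})`_k) / (j`!)%:R.

Definition laguerre (R : realType) (k : nat) : {poly R} :=
  \poly_(j < k.+1) lag_coef R k j.

From HB Require Import structures.
From mathcomp Require Import all_boot all_order all_algebra.
From mathcomp Require Import finmap.
From mathcomp.multinomials Require Import monalg.
From mathcomp Require Import reals.
From mathcomp Require Import ring.
Set Implicit Arguments.
Unset Strict Implicit.
Unset Printing Implicit Defensive.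
Import Order.TTheory GRing.Theory Num.Theory.
Local Open Scope ring_scope.

(* Since Phi(t^j) = j!, applying Phi to l_k(t) = sum_j [x^k](x/(1+x))^j t^j/j!
   gives [x^k] sum_j (x/(1+x))^j = [x^k] 1/(1 - x/(1+x)) = [x^k] (1 + x),
   which is 1 for k <= 1 and 0 otherwise.  Hence Phi(f_{A,w}) keeps exactly
   the weights of the elements of A with at most one part. *)

Lemma subr1X_sum (R : pzRingType) (x : R) n : (1 - x) * \sum_(i < n) x ^+ i = 1 - x ^+ n.
Proof. by rewrite -opprB mulNr -subrX1 opprB. Qed.

Section TruncatedGeometricSeries.
Variable R : comNzRingType.

Definition inv1pX_trunc k : {poly R} := \sum_(i < k.+1) (- 'X) ^+ i.

Lemma mul1pX_inv1pX_trunc k :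
  (1 + 'X) * inv1pX_trunc k = 1 - (-1) ^+ k.+1 * 'X ^+ k.+1.
Proof. by rewrite /inv1pX_trunc -[X in 1 + X]opprK subr1X_sum -exprMn mulN1r. Qed.

Lemma coef_geom_xdiv1pX k :
  (\sum_(j < k.+1) ('X * inv1pX_trunc k) ^+ j)`_k = (k <= 1)%N%:R.
Proof.
set g := inv1pX_trunc k; set T := \sum_(j < _) _.
have hT : (1 - 'X * g) * T = 1 - g ^+ k.+1 * 'X ^+ k.+1.
  by rewrite subr1X_sum exprMn mulrC.
(* Multiplying by 1 + X turns 1 - X g into 1 + (-1)^(k+1) X^(k+2). *)
have E : T + (-1) ^+ k.+1 * T * 'X ^+ k.+2
         = (1 + 'X) - (1 + 'X) * g ^+ k.+1 * 'X ^+ k.+1.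
  transitivity ((1 + 'X) * ((1 - 'X * g) * T)); last by rewrite hT; ring.
  transitivity (((1 + 'X) - 'X * ((1 + 'X) * g)) * T); last by ring.
  by rewrite mul1pX_inv1pX_trunc (exprS _ k.+1); ring.
have := congr1 (fun p : {poly R} => p`_k) E.
rewrite !coefD !coefMXn coefN coefMXn ltnS leqnSn ltnSn addr0 oppr0 addr0 => ->.
by rewrite coef1 coefX; case: k {g T hT E} => [|[|k]]; rewrite /= ?addr0 ?add0r.
Qed.

End TruncatedGeometricSeries.

Section LaguerreCoefficients.
Variable R : realType.

Lemma coef0_laguerre0 : (laguerre R 0)`_0 = 1.
Proof. by rewrite coef_poly /= /lag_coef expr0 coef1 /= invr1 mulr1. Qed.

Lemma coef1_laguerreS k : (laguerre R k.+1)`_1 = (-1) ^+ k.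
Proof.
rewrite coef_poly /= /lag_coef expr1 coefXM /= invr1 mulr1.
have -> : (\sum_(i < k.+2) (- 'X) ^+ i : {poly R}) =
    \sum_(i < k.+2) ((-1) ^+ i) *: 'X^(nat_of_ord i).
  by apply: eq_bigr => i _; rewrite -scaleN1r exprZn.
rewrite coef_sumMXn (big_pred1 (inord k)) ?inordK //.
by move=> i /=; rewrite -(inj_eq val_inj) /= inordK.
Qed.

Lemma laguerre_coef01_neq0 k :
  (laguerre R k)`_0 != 0 \/ (laguerre R k)`_1 != 0.
Proof.
case: k => [|k]; first by left; rewrite coef0_laguerre0 oner_eq0.
by right; rewrite coef1_laguerreS signr_eq0.
Qed.

Lemma sum_fact_coef_laguerre k M : (k < M)%N ->
  \sum_(j < M) (j`!)%:R * (laguerre R k)`_j = (k <= 1)%N%:R.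
Proof.
move=> ltkM; rewrite -(coef_geom_xdiv1pX R k) coef_sum.
rewrite (big_ord_widen _ (fun j => (('X * inv1pX_trunc R k) ^+ j)`_k) ltkM).
rewrite [RHS]big_mkcond; apply: eq_bigr => j _; rewrite coef_poly.
case: ifP => _; last by rewrite mulr0.
by rewrite /lag_coef mulrC divfK // pnatr_eq0 -lt0n fact_gt0.
Qed.

Lemma sum_fact_laguerre_series (I : eqType) (s : seq I) (a : I -> R)
    (k : I -> nat) M :
  (forall i, i \in s -> k i < M)%N ->
  \sum_(j < M) (j`!)%:R * \sum_(i <- s) a i * (laguerre R (k i))`_j
  = \sum_(i <- s | (k i <= 1)%N) a i.
Proof.
move=> ltkM; under eq_bigr do rewrite mulr_sumr.
rewrite exchange_big [RHS]big_mkcond /=; apply: eq_big_seq => i si.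
under eq_bigr do rewrite mulrCA; rewrite -mulr_sumr sum_fact_coef_laguerre ?ltkM //.
by case: ifP => _; rewrite ?mulr1 ?mulr0.
Qed.

End LaguerreCoefficients.

Section FiniteSums.
Variables (R : realType) (I : eqType).

Lemma has_fsumE (P : I -> Prop) (F : I -> R) c s :
  has_fsum P F c -> uniq s -> (forall i, i \in s -> P i) ->
  (forall i, P i -> F i != 0 -> i \in s) -> c = \sum_(i <- s) F i.
Proof.
move=> [t [ut tP tS ->]] us sP sS.
rewrite (bigID (fun i => F i != 0)) /= [X in _ + X]big1; last by move=> i /negPn/eqP.
rewrite addr0 [RHS](bigID (fun i => F i != 0)) /= [X in _ + X]big1; last by move=> i /negPn/eqP.
rewrite addr0 -!(big_filter _ (fun i => F i != 0)); apply: perm_big.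
apply: uniq_perm; rewrite ?filter_uniq // => i; rewrite !mem_filter.
by apply/andP/andP => -[Fi Hi]; split => //; [exact: sS (tP _ Hi) Fi|exact: tS (sP _ Hi) Fi].
Qed.

Lemma has_fsum01_support (P : I -> Prop) (a : I -> R) (b : I -> nat -> R) c0 c1 :
  has_fsum P (fun i => a i * b i 0%N) c0 -> has_fsum P (fun i => a i * b i 1%N) c1 ->
  (forall i, b i 0%N != 0 \/ b i 1%N != 0) ->
  exists s : seq I, [/\ uniq s, (forall i, i \in s -> P i)
                     & (forall i, P i -> a i != 0 -> i \in s)].
Proof.
move=> [s0 [_ P0 S0 _]] [s1 [_ P1 S1 _]] b01.
exists (undup (s0 ++ s1)); split; first exact: undup_uniq.
  by move=> i; rewrite mem_undup mem_cat => /orP[]; [apply: P0|apply: P1].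
move=> i Pi ai; rewrite mem_undup mem_cat.
by case: (b01 i) => bi; [rewrite S0|rewrite S1 ?orbT] => //; rewrite mulf_neq0.
Qed.

End FiniteSums.

Lemma sum_ord_widen0 (R : nmodType) (F : nat -> R) N M :
  (forall j, (N <= j)%N -> F j = 0) -> (N <= M)%N ->
  \sum_(j < N) F j = \sum_(j < M) F j.
Proof.
move=> F0 leNM; rewrite (big_ord_widen _ F leNM) big_mkcond.
by apply: eq_bigr => j _; case: ltnP => // /F0.
Qed.

Theorem proposition2p6 (R : realType) (S : eqType)
    (A : seq (seq S) -> Prop) (w : seq (seq S) -> xpoly R) :
  (* A is a set of factorizations on S *)
  (forall phi, A phi -> is_factorization phi) ->
  (* w is a weight on A *)
  (forall phi, A phi -> forall T : pred S,
      w phi = w (restrict T phi) * w (restrict (predC T) phi)) ->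
  (* F m j = coefficient of x^m t^j in the Laguerre series f_{A,w}(t),
     which is assumed well-defined as a formal power series *)
  forall F : monom -> nat -> R,
  (forall m j, has_fsum A (fun phi => (w phi)@_m * (laguerre R (parts phi))`_j)
                        (F m j)) ->
  forall (m : monom) (N : nat) (r : R),
  (* the x^m-coefficient of f_{A,w} is a polynomial in t (so Phi applies) *)
  (forall j, (N <= j)%N -> F m j = 0) ->
  (* r = x^m-coefficient of sum of w(W) over W in A with at most one part *)
  has_fsum (fun phi => A phi /\ (parts phi <= 1)%N) (fun phi => (w phi)@_m) r ->
  (* x^m-coefficient of Phi(f_{A,w}(t)) *)
  \sum_(j < N) (j`!)%:R * F m j = r.
Proof.
move=> _ _ F hF m N r hN hr.
(* Each l_k has a nonzero coefficient in degree 0 or 1, so the supports of the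
   sums defining F m 0 and F m 1 cover all phi in A with (w phi)@_m != 0. *)
have [s [us sA sw]] := has_fsum01_support
  (b := fun phi j => (laguerre R (parts phi))`_j) (hF m 0%N) (hF m 1%N)
  (fun phi => laguerre_coef01_neq0 R (parts phi)).
have Fs j : F m j = \sum_(phi <- s) (w phi)@_m * (laguerre R (parts phi))`_j.
  apply: (has_fsumE (hF m j) us sA) => phi Aphi nz; apply: sw => //.
  by apply: contraNneq nz => ->; rewrite mul0r.
have -> : r = \sum_(phi <- s | (parts phi <= 1)%N) (w phi)@_m.
  rewrite -big_filter; apply: (has_fsumE hr); first exact: filter_uniq.
    by move=> phi; rewrite mem_filter => /andP[? /sA].
  by move=> phi [Aphi ?] wn; rewrite mem_filter; apply/andP; split=> //; apply: sw.
pose M := maxn N (\max_(phi <- s) parts phi).+1.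
rewrite (@sum_ord_widen0 _ (fun j => (j`!)%:R * F m j) N M); first last.
- exact: leq_maxl.
- by move=> j /hN ->; rewrite mulr0.
under eq_bigr do rewrite Fs; apply: sum_fact_laguerre_series => phi sphi.
by rewrite leq_max ltnS (leq_bigmax_seq _ sphi) ?orbT.
Qed.
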